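(* For every $M\in[\mathbb N]$, every $\epsilon>0$ and all ordinals $\zeta<\xi<\omega_1$, there exists $N\in[M]$ such that $\|\xi_n^L\|_\zeta<\epsilon$ for all $L\in[N]$ and all $n\in\mathbb N$.
   Context: $[M]$ is the set of infinite subsets of $M$, enumerated increasingly $M=(m_n)$. For each countable ordinal $\xi$ fix successor ordinals $(\beta_n(\xi)+1)_n$: equal to $\xi$ if $\xi$ is a successor, strictly increasing to $\xi$ if $\xi$ is a limit. Schreier families: $S_0=\{\{n\}:n\in\mathbb N\}\cup\{\emptyset\}$; $S_{\zeta+1}=\{\bigcup_{i=1}^nF_i:n\le\min F_1,\ F_1<\cdots<F_n,\ F_i\in S_\zeta\}\cup\{\emptyset\}$ ($F<G$ means $\max F<\min G$); for limit $\xi$, $S_\xi=\{F:F\in S_{\beta_n(\xi)+1}\text{ for some }n\le\min F\}$. For a signed measure $\mu$ on $\mathbb N$, $\|\mu\|_\zeta=\sup\{|\mu|(F):F\in S_\zeta\}$. Repeated averages: identify $\ell_1$ with signed measures on $\mathbb N$ with unit vector basis $(e_n)$. For $\xi<\omega_1$ and $M=(m_n)\in[\mathbb N]$ define finitely supported probability measures $\xi_n^M$ by transfinite induction: $0_n^M=e_{m_n}$. If $\xi=\zeta+1$: $\xi_1^M=\frac1{m_1}\sum_{i=1}^{m_1}\zeta_i^M$; given $\xi_n^M$, let $M_n=\{m\in M:m>\max\operatorname{supp}\xi_n^M\}$, $k_n=\min M_n$, $\xi_{n+1}^M=\frac1{k_n}\sum_{i=1}^{k_n}\zeta_i^{M_n}$.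 If $\xi$ is a limit: $\xi_1^M=[\beta_{m_1}(\xi)+1]_1^M$ and $\xi_{n+1}^M=[\beta_{k_n}(\xi)+1]_1^{M_n}$ with $M_n,k_n$ as before ($[\gamma]_1^P$ is the first measure of order $\gamma$ for the set $P$). *)

From HB Require Import structures.
From mathcomp Require Import all_boot all_order all_algebra.
From mathcomp Require Import boolp classical_sets reals.
Set Implicit Arguments. Unset Strict Implicit. Unset Printing Implicit Defensive.
Import Order.TTheory GRing.Theory Num.Theory.
Local Open Scope ring_scope.

(* Countable ordinals.  A model of omega_1: a well-founded strict total     *)
(* order which is uncountable, all of whose proper initial segments are     *)
(* countable.  Any such structure is order-isomorphic to omega_1, i.e. its  *)
(* elements are exactly the countable ordinals.                             *)
Record omega1 := Omega1 {
  ord :> Type;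
  olt : ord -> ord -> Prop;
  olt_wf : well_founded olt;
  olt_trans : forall x y z, olt x y -> olt y z -> olt x z;
  olt_total : forall x y, olt x y \/ x = y \/ olt y x;
  olt_ctbl : forall x, exists f : nat -> ord, forall y, olt y x -> exists n, f n = y;
  ord_unctbl : ~ exists f : nat -> ord, forall y, exists n, f n = y
}.

Section Ordinals.
Variable O : omega1.

Definition is_succ_of (eta xi : O) :=
  olt eta xi /\ forall z, olt z xi -> z = eta \/ olt z eta.
Definition is_zero (xi : O) := forall z, ~ olt z xi.
Definition is_limit (xi : O) :=
  (exists z, olt z xi) /\ ~ (exists eta, is_succ_of eta xi).

(* beta xi n is beta_n(xi) for n >= 1 (the value at n = 0 is unused).
   (beta_n(xi)+1)_n is: constantly xi when xi is a successor; a strictly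
   increasing sequence converging to xi when xi is a limit. *)
Definition fundamental_seqs (beta : O -> nat -> O) :=
  forall xi : O,
    (forall eta, is_succ_of eta xi -> forall n, (0 < n)%N -> beta xi n = eta) /\
    (is_limit xi -> exists s : nat -> O,
        (forall n, (0 < n)%N -> is_succ_of (beta xi n) (s n)) /\
        (forall n, (0 < n)%N -> olt (s n) (s n.+1)) /\
        (forall n, olt (s n) xi) /\
        (forall z, olt z xi -> exists2 n, (0 < n)%N & olt z (s n))).

Variable beta : O -> nat -> O.

(* Schreier families.  A finite subset of N = {1,2,...} is represented by  *)
(* the strictly increasing list of its elements.  In the successor clause  *)
(* F = F_1 u ... u F_n with F_1 < ... < F_n nonempty blocks, which as      *)
(* lists is the concatenation of the blocks.                               *)
Inductive schreier : O -> seq nat -> Prop :=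
| sch_zero_nil z : is_zero z -> schreier z [::]
| sch_zero_single z k : is_zero z -> (0 < k)%N -> schreier z [:: k]
| sch_succ_nil z eta : is_succ_of eta z -> schreier z [::]
| sch_succ z eta (Fs : seq (seq nat)) :
    is_succ_of eta z ->
    Fs != [::] ->
    (forall G, G \in Fs -> G != [::]) ->
    (forall G, G \in Fs -> schreier eta G) ->
    sorted (fun A B => (last 0 A < head 0 B)%N) Fs ->
    (size Fs <= head 0%N (head [::] Fs))%N ->
    schreier z (flatten Fs)
| sch_limit z n gamma F :
    is_limit z -> (0 < n)%N ->
    is_succ_of (beta z n) gamma -> schreier gamma F ->
    (F = [::] \/ (n <= head 0%N F)%N) ->
    schreier z F.

Variable R : realType.

(* Finitely supported signed measures on N: mu is the list of its values *)
(* mu(0), mu(1), ..., i.e. mu({k}) = mu`_k.                              *)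
Definition meas := seq R.
Definition dirac (k : nat) : meas := rcons (nseq k 0) 1.
Definition madd (s t : meas) : meas :=
  mkseq (fun k => s`_k + t`_k) (maxn (size s) (size t)).
Definition mscale (a : R) (s : meas) : meas := map ( *%R a) s.
Definition maxsupp (mu : meas) : nat := \max_(k < size mu | mu`_k != 0) k.

Definition absmass (mu : meas) (F : seq nat) : R := \sum_(k <- F) `|mu`_k|.
Definition snorm (zeta : O) (mu : meas) : R :=
  sup [set x : R | exists F, schreier zeta F /\ x = absmass mu F].

(* Infinite subsets of N = {1,2,...} are represented by their increasing  *)
(* enumerations m : nat -> nat (m 0 = m_1, m 1 = m_2, ...).               *)
Definition incr (m : nat -> nat) := forall i, (m i < m i.+1)%N.
Definition infsubN (m : nat -> nat) := incr m /\ (0 < m 0)%N.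
Definition infsub (l m : nat -> nat) := incr l /\ forall i, exists j, l i = m j.

(* {m in M : m > b}, for M increasing (its elements <= b are among the
   first b+1 ones since m_i >= i). *)
Definition after (m : nat -> nat) (b : nat) : nat -> nat :=
  fun i => m (i + \sum_(j < b.+1) (m j <= b))%N.

(* Repeated averages.  ravg xi M n = xi_{n+1}^M (0-based index n). *)
Definition ravgT (xi : O) := (nat -> nat) -> nat -> meas.

Definition iter_first (first : (nat -> nat) -> meas) (m : nat -> nat) : nat -> meas :=
  fix it n := match n with
  | 0 => first m
  | n'.+1 => first (after m (maxsupp (it n')))
  end.

Definition ravg_body (xi : O) (rec : forall eta, olt eta xi -> ravgT eta) : ravgT xi :=
  match pselect (exists eta, is_succ_of eta xi) with
  | left h =>
      let eta := proj1_sig (cid h) in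
      let lt := proj1 (proj2_sig (cid h)) in
      iter_first (fun p => mscale ((p 0)%:R)^-1
                    (\big[madd/[::]]_(i < p 0) rec eta lt p i))
  | right _ =>
      match pselect (exists z, olt z xi) with
      | left _ =>
          iter_first (fun p =>
            match pselect (exists g, is_succ_of (beta xi (p 0)) g /\ olt g xi) with
            | left hg => let g := proj1_sig (cid hg) in
                         rec g (proj2 (proj2_sig (cid hg))) p 0
            | right _ => [::]
            end)
      | right _ => fun m n => dirac (m n)
      end
  end.

Definition ravg : forall xi : O, ravgT xi := Fix (@olt_wf O) ravgT ravg_body.

End Ordinals.

From HB Require Import structures.
From mathcomp Require Import all_boot all_order all_algebra.
From mathcomp Require Import boolp reals.
From mathcomp Require Import zify lra.
Import Order.TTheory GRing.Theory Num.Theory.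
Set Implicit Arguments. Unset Strict Implicit. Unset Printing Implicit Defensive.
Local Open Scope ring_scope.

(* By well-founded induction on xi we prove two properties at once:
   (T) for zeta < xi and eps > 0, every M contains an N with ||xi_1^L||_zeta <= eps
       for all L in [N];
   (B) for some C, every M contains an N with sum_i |xi_i^L|(F) <= C for all L in [N]
       and F in S_xi.
   Each xi_n^L equals xi_1^L' for some L' in [L], so (T) gives the theorem.
   If xi = eta + 1, xi_1^L averages L_1 measures eta_i^L: for zeta = eta, (B) for eta
   bounds the average by C / L_1; for zeta < eta every term is small by (T) for eta.
   For a limit xi, xi_1^L = (eta + 1)_1^L with eta = beta_{L_1}(xi) and the same argument
   applies, except that (T) for eta must be made uniform in L_1: a diagonal argument
   controls every averaged term but the first, which contributes at most 1 / L_1.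
   For (B), the supports of the xi_i^L are consecutive blocks starting at p_i, and on a
   doubling L the p_i grow geometrically.  If x = min F, at most one xi_i^L with
   p_i <= x meets F, and every xi_i^L with p_i > x has mass O(1 / p_i) on F: in the
   successor case F is a union of at most x sets of S_eta and (B) for eta applies; in the
   limit case (T) for beta_{p_i}(xi) with eps = 1 / p_i (diagonalised again) applies to
   all i but the one with beta_{p_i}(xi) = beta_n(xi) + 1, where F is in S_{beta_n(xi)+1}.
   The geometric series then gives a bound independent of x. *)

Section InfiniteSubsets.
Implicit Types (P Q L N M : nat -> nat).

Definition tail P i := P i.+1.
Definition doubling P := forall i, (2 * P i <= P i.+1)%N.

Lemma incr_leq P : incr P -> {mono P : i j / (i <= j)%N}.
Proof. by move=> hP; apply: leq_mono (homo_ltn ltn_trans hP). Qed.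

Lemma incr_ltn P : incr P -> {mono P : i j / (i < j)%N}.
Proof. by move=> hP i j; rewrite !ltnNge (incr_leq hP). Qed.

Lemma incr_inj P : incr P -> injective P.
Proof. by move=> hP; apply: incn_inj (incr_leq hP). Qed.

Lemma incr_geq_id P i : incr P -> (i <= P i)%N.
Proof. by move=> hP; elim: i => // i IH; apply: leq_ltn_trans IH (hP i). Qed.

Lemma after_gt P b i : incr P -> (b < after P b i)%N.
Proof.
move=> hP; set c := (\sum_(j < b.+1) (P j <= b))%N.
suff hc : (b < P c)%N by apply: leq_trans hc _; rewrite (incr_leq hP) leq_addl.
rewrite ltnNge; apply/negP => hcb.
have hcb' : (c <= b)%N by apply: leq_trans (incr_geq_id c hP) hcb.
have : (c.+1 <= \sum_(0 <= j < b.+1) (P j <= b))%N.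
  rewrite (@big_cat_nat _ _ _ c.+1) //=.
  rewrite (eq_big_nat _ _ (F2 := fun _ => 1%N)) ?sum_nat_const_nat => [|j /andP[_ hj]].
    by rewrite subn0 muln1 leq_addr.
  by rewrite (leq_trans _ hcb) // (incr_leq hP).
by rewrite big_mkord ltnn.
Qed.

Lemma after_incr P b : incr P -> incr (after P b).
Proof. by move=> hP i; rewrite /after (incr_ltn hP) addSn. Qed.

Lemma infsub_refl P : incr P -> infsub P P.
Proof. by move=> hP; split => // i; exists i. Qed.

Lemma infsub_trans L N M : infsub L N -> infsub N M -> infsub L M.
Proof. by move=> [hL hLN] [_ hNM]; split => // i; have [j ->] := hLN i. Qed.

Lemma infsubN_infsub L N : infsub L N -> infsubN N -> infsubN L.
Proof.
move=> [hL hLN] [hN hN0]; split => //.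
by have [j ->] := hLN 0%N; apply: leq_trans hN0 _; rewrite (incr_leq hN).
Qed.

Lemma infsubN_gt0 P i : infsubN P -> (0 < P i)%N.
Proof. by move=> [hP hP0]; apply: leq_trans hP0 _; rewrite (incr_leq hP). Qed.

Lemma infsub_after P b : incr P -> infsub (after P b) P.
Proof. by move=> hP; split; [exact: after_incr | move=> i; eexists]. Qed.

Lemma infsub_after_tail P b : incr P -> (P 0 <= b)%N -> infsub (after P b) (tail P).
Proof.
move=> hP hb; split; first exact: after_incr.
move=> i; exists (i + \sum_(j < b.+1) (P j <= b)).-1; rewrite /tail /after prednK //.
by rewrite big_ord_recl /= hb addnA addn1.
Qed.

Lemma infsub_tail P : incr P -> infsub (tail P) P.
Proof. by move=> hP; split => [i | i]; [exact: hP | exists i.+1]. Qed.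

Lemma infsubN_tail P : infsubN P -> infsubN (tail P).
Proof. by move=> [hP hP0]; split => [i | ]; [exact: hP | exact: ltn_trans hP0 (hP 0%N)]. Qed.

Lemma doubling_infsub L N : infsub L N -> incr N -> doubling N -> doubling L.
Proof.
move=> [hL hLN] hN hD i; have [j hj] := hLN i; have [j' hj'] := hLN i.+1.
have hjj' : (j < j')%N by rewrite -(incr_ltn hN) -hj -hj'.
by rewrite hj hj'; apply: leq_trans (hD j) _; rewrite (incr_leq hN).
Qed.

Definition large (Pr : (nat -> nat) -> Prop) :=
  forall M, infsubN M -> exists2 N, infsub N M & forall L, infsub L N -> Pr L.

Lemma large_all (Pr : (nat -> nat) -> Prop) : (forall L, infsubN L -> Pr L) -> large Pr.
Proof.
move=> hPr M hM; exists M => [|L hL]; first by apply: infsub_refl; case: hM.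
exact/hPr/(infsubN_infsub hL).
Qed.

Lemma large_impl (Pr Pr' : (nat -> nat) -> Prop) :
  (forall L, infsubN L -> Pr L -> Pr' L) -> large Pr -> large Pr'.
Proof.
move=> hPP hPr M hM; have [N hNM hN] := hPr M hM.
exists N => // L hLN; apply: hPP (hN L hLN).
exact: infsubN_infsub hLN (infsubN_infsub hNM hM).
Qed.

Lemma large_hered (Pr : (nat -> nat) -> Prop) :
  large Pr -> large (fun L => forall L', infsub L' L -> Pr L').
Proof.
move=> hPr M hM; have [N hNM hN] := hPr M hM.
by exists N => // L hLN L' hL'L; apply: hN (infsub_trans hL'L hLN).
Qed.

Lemma large_and (Pr Pr' : (nat -> nat) -> Prop) :
  large Pr -> large Pr' -> large (fun L => Pr L /\ Pr' L).
Proof.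
move=> hPr hPr' M hM; have [N hNM hN] := hPr M hM.
have [N' hN'N hN'] := hPr' N (infsubN_infsub hNM hM).
exists N'; first exact: infsub_trans hN'N hNM.
by move=> L hLN'; split; [apply: hN (infsub_trans hLN' hN'N) | apply: hN'].
Qed.

Lemma large_cond (C : Prop) (Pr : (nat -> nat) -> Prop) :
  (C -> large Pr) -> large (fun L => C -> Pr L).
Proof.
move=> hC; have [c | nc] := pselect C; last by apply: large_all => L _ /nc.
by apply: large_impl (hC c) => L _ hL _.
Qed.

Lemma large_all_lt q (Pr : nat -> (nat -> nat) -> Prop) :
  (forall n, (n < q)%N -> large (Pr n)) -> large (fun L => forall n, (n < q)%N -> Pr n L).
Proof.
elim: q => [|q IH] hPr; first exact: large_all.
apply: large_impl (large_and (IH (fun n hn => hPr n (ltnW hn))) (hPr q (ltnSn q))).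
by move=> L _ [hlt hq] n; rewrite ltnS leq_eqVlt => /orP[/eqP -> | /hlt].
Qed.

Lemma large_ge K : large (fun L => (K <= L 0)%N).
Proof.
move=> M [hM _]; exists (fun i => M (i + K)%N).
  by split => [i | i]; [rewrite (incr_ltn hM) addSn | exists (i + K)%N].
move=> L [_ hL]; have [j ->] := hL 0%N.
exact: leq_trans (leq_addl j K) (incr_geq_id _ hM).
Qed.

Lemma large_doubling : large doubling.
Proof.
move=> M [hM _].
(* M (g i.+1) >= g i.+1 > 2 * M (g i) *)
pose g := fix g i := if i is i'.+1 then (2 * M (g i')).+1 else 0%N.
have hg : incr g by move=> i /=; have := incr_geq_id (g i) hM; lia.
have hMg : incr (fun i => M (g i)) by move=> i; rewrite (incr_ltn hM).
exists (fun i => M (g i)); first by split => // i; exists (g i).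
move=> L hL; apply: doubling_infsub hL hMg _ => i /=.
by have := incr_geq_id (2 * M (g i)).+1 hM; lia.
Qed.

Lemma infsub_tail_shift L N j : infsub L N -> incr N -> L 0 = N j ->
  infsub (tail L) (fun t => N (t + j.+1)%N).
Proof.
move=> [hL hLN] hN hj; split => [t | t]; first exact: hL.
have [j' hj'] := hLN t.+1.
have : (N j < N j')%N by rewrite -hj -hj' (incr_ltn hL).
by rewrite (incr_ltn hN) => hjj'; exists (j' - j.+1)%N; rewrite /tail hj' subnK.
Qed.

(* N j is the head of T j, where T j.+1 is a subset of tail (T j) on all of whose
   subsets Pr (T j 0) holds. *)
Lemma large_diagonal (Pr : nat -> (nat -> nat) -> Prop) :
  (forall q, large (Pr q)) -> large (fun L => forall Q, infsub Q (tail L) -> Pr (L 0) Q).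
Proof.
move=> hPr M hM.
have hex q P : exists N, infsubN P -> infsub N P /\ forall L, infsub L N -> Pr q L.
  have [hP | hP] := pselect (infsubN P); last by exists P.
  by have [N hNP hN] := hPr q P hP; exists N.
pose shrink q P := proj1_sig (cid (hex q P)).
have hshrink q P : infsubN P ->
    infsub (shrink q P) P /\ forall L, infsub L (shrink q P) -> Pr q L.
  exact: proj2_sig (cid (hex q P)).
pose T := fix T j := if j is j'.+1 then shrink (T j' 0%N) (tail (T j')) else M.
have hT : forall j, infsubN (T j).
  elim=> [//|j IH]; have [hs _] := hshrink (T j 0%N) _ (infsubN_tail IH).
  exact: infsubN_infsub hs (infsubN_tail IH).
have hTS j : infsub (T j.+1) (tail (T j)) := (hshrink _ _ (infsubN_tail (hT j))).1.
have hTPr j : forall L, infsub L (T j.+1) -> Pr (T j 0%N) L :=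
  (hshrink _ _ (infsubN_tail (hT j))).2.
have hTsub j k : infsub (T (k + j)%N) (T j).
  elim: k => [|k IH]; first by apply: infsub_refl; case: (hT j).
  apply: infsub_trans (infsub_trans (hTS _) (infsub_tail _)) IH; by case: (hT (k + j)%N).
pose N j := T j 0%N.
have hNT j t : exists u, N (t + j)%N = T j u by have [_ h] := hTsub j t; apply: h.
have hN : incr N.
  move=> j; have [[hTj _] [_ hs]] := (hT j, hTS j); have [u hu] := hs 0%N.
  by rewrite /N hu (incr_ltn hTj).
exists N; first by split => // i; have [u hu] := hNT 0%N i; rewrite addn0 in hu; exists u.
move=> L hLN Q hQ; have [j hj] := hLN.2 0%N.
rewrite hj; apply: hTPr; apply: infsub_trans hQ _.
apply: infsub_trans (infsub_tail_shift hLN hN hj) _.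
split => [t | t]; first by rewrite (incr_ltn hN) addSn.
by have := hNT j.+1 t; rewrite addnS -addSn.
Qed.

End InfiniteSubsets.

Section Measures.
Variable R : realType.
Implicit Types (mu s t : meas R) (F : seq nat).

Lemma nth_madd s t k : (madd s t)`_k = s`_k + t`_k.
Proof.
rewrite /madd; case: (ltnP k (maxn (size s) (size t))) => h; first by rewrite nth_mkseq.
rewrite nth_default ?size_mkseq //.
by move: h; rewrite geq_max => /andP[h1 h2]; rewrite !nth_default // addr0.
Qed.

Lemma nth_mscale a s k : (mscale a s)`_k = a * s`_k.
Proof.
rewrite /mscale; case: (ltnP k (size s)) => h; first by rewrite (nth_map 0).
by rewrite !nth_default ?size_map // mulr0.
Qed.

Lemma nth_bigmadd p (G : nat -> meas R) k :
  (\big[@madd R/[::]]_(i < p) G i)`_k = \sum_(i < p) (G i)`_k.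
Proof.
apply: (big_rec2 (fun (mu : meas R) r => mu`_k = r)); first by rewrite nth_nil.
by move=> i mu r _ <-; rewrite nth_madd.
Qed.

Lemma nth_dirac j k : (dirac R j)`_k = (j == k)%:R.
Proof.
rewrite /dirac nth_rcons size_nseq nth_nseq.
by case: (ltngtP k j).
Qed.

Definition vanishes_from mu K := forall k, (K <= k)%N -> mu`_k = 0.
Definition is_prob mu :=
  (forall k, 0 <= mu`_k) /\ exists2 K, vanishes_from mu K & \sum_(k < K) mu`_k = 1.
Definition supp_in (P : nat -> nat) mu := forall k, mu`_k != 0 -> exists j, P j = k.

Lemma sum_vanishes_from (f : nat -> R) K1 K2 : (K1 <= K2)%N ->
  (forall k, (K1 <= k)%N -> f k = 0) -> \sum_(k < K2) f k = \sum_(k < K1) f k.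
Proof.
move=> h hf; rewrite -!(big_mkord xpredT) (big_cat_nat (leq0n K1) h) /=.
rewrite [X in _ + X]big1_seq ?addr0 // => k /andP[_].
by rewrite mem_index_iota => /andP[hk _]; exact: hf.
Qed.

Lemma prob_sum_vanishes_from mu K : is_prob mu -> vanishes_from mu K -> \sum_(k < K) mu`_k = 1.
Proof.
move=> [_ [K' hv' hs']] hv.
rewrite -(@sum_vanishes_from _ K (maxn K K')) ?leq_maxl //.
by rewrite (@sum_vanishes_from _ K' (maxn K K')) ?leq_maxr.
Qed.

Lemma prob_dirac j : is_prob (dirac R j).
Proof.
split=> [k | ]; first by rewrite nth_dirac ler0n.
exists j.+1 => [k hk | ]; first by rewrite nth_dirac ltn_eqF.
rewrite big_ord_recr /= nth_dirac eqxx big1 ?add0r // => i _.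
by rewrite nth_dirac (gtn_eqF (ltn_ord i)).
Qed.

Lemma prob_avg p (G : nat -> meas R) : (0 < p)%N -> (forall i, (i < p)%N -> is_prob (G i)) ->
  is_prob (mscale (p%:R)^-1 (\big[@madd R/[::]]_(i < p) G i)).
Proof.
move=> hp hG; split=> [k | ].
  rewrite nth_mscale nth_bigmadd mulr_ge0 ?invr_ge0 ?ler0n // sumr_ge0 // => i _.
  exact: (hG i (ltn_ord i)).1.
have [K hK] : exists K, forall i, (i < p)%N -> vanishes_from (G i) K.
  elim: (p) hG => [|q IH] hGq; first by exists 0%N.
  have [K1 hK1] := IH (fun i hi => hGq i (ltnW hi)).
  have [_ [K2 hv2 _]] := hGq q (ltnSn q).
  exists (maxn K1 K2) => i; rewrite ltnS leq_eqVlt => /orP[/eqP -> | hi] k hk.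
    by apply: hv2; move: hk; rewrite geq_max => /andP[].
  by apply: (hK1 i hi); move: hk; rewrite geq_max => /andP[].
exists K => [k hk | ].
  by rewrite nth_mscale nth_bigmadd big1 ?mulr0 // => i _; apply: (hK i (ltn_ord i)).
under eq_bigr do rewrite nth_mscale nth_bigmadd.
rewrite -mulr_sumr exchange_big /=.
under eq_bigr => i _ do rewrite (prob_sum_vanishes_from (hG i (ltn_ord i)) (hK i (ltn_ord i))).
by rewrite sumr_const card_ord mulVf // pnatr_eq0 -lt0n.
Qed.

Lemma supp_in_avg P p (G : nat -> meas R) : (forall i, (i < p)%N -> supp_in P (G i)) ->
  supp_in P (mscale (p%:R)^-1 (\big[@madd R/[::]]_(i < p) G i)).
Proof.
move=> hG k; rewrite nth_mscale nth_bigmadd => hk.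
have [[i hi] | hno] := pselect (exists i : 'I_p, (G i)`_k != 0).
  exact: (hG i (ltn_ord i) k hi).
move: hk; rewrite big1 ?mulr0 ?eqxx // => i _.
by apply/eqP/negPn/negP => hi; apply: hno; exists i.
Qed.

Lemma supp_in_infsub P Q mu : infsub Q P -> supp_in Q mu -> supp_in P mu.
Proof. by move=> [_ hQP] h k /h [j <-]; have [j' ->] := hQP j; exists j'. Qed.

Lemma leq_maxsupp mu k : mu`_k != 0 -> (k <= maxsupp mu)%N.
Proof.
move=> hk; case: (ltnP k (size mu)) => h; last by rewrite nth_default ?eqxx in hk.
exact: (@leq_bigmax_cond _ _ (fun i : 'I_(size mu) => (i : nat)) (Ordinal h)).
Qed.

Lemma prob_supp_neq0 mu : is_prob mu -> exists k, mu`_k != 0.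
Proof.
move=> [_ [K _ hs]]; apply/not_existsP => h.
move: hs; rewrite big1 => [/eqP | k _]; first by rewrite eq_sym oner_eq0.
by apply/eqP/negPn/negP/h.
Qed.

Lemma sum_uniq_le (g : nat -> R) K F : (forall k, 0 <= g k) ->
  (forall k, (K <= k)%N -> g k = 0) -> uniq F -> \sum_(k <- F) g k <= \sum_(k < K) g k.
Proof.
move=> g0 gK hF; rewrite -(big_mkord xpredT).
rewrite (bigID (fun k => k < K)%N) /= [X in _ + X]big1 => [|k]; last by rewrite -leqNgt => /gK.
rewrite addr0 -big_filter (perm_big [seq k <- index_iota 0 K | k \in F]); last first.
  apply: uniq_perm; [exact: filter_uniq | exact: filter_uniq (iota_uniq _ _) | move=> k].
  by rewrite !mem_filter mem_index_iota andbC.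
by rewrite big_filter big_mkcond /=; apply: ler_sum => k _; case: ifP.
Qed.

Lemma absmass_ge0 mu F : 0 <= absmass mu F.
Proof. exact: sumr_ge0. Qed.

Lemma absmass_prob_le1 mu F : is_prob mu -> uniq F -> absmass mu F <= 1.
Proof.
move=> [h0 [K hv <-]] hF; rewrite /absmass.
under eq_bigr do rewrite ger0_norm //.
exact: sum_uniq_le.
Qed.

Lemma absmass_mscale a s F : absmass (mscale a s) F = `|a| * absmass s F.
Proof. by rewrite /absmass mulr_sumr; apply: eq_bigr => k _; rewrite nth_mscale normrM. Qed.

Lemma absmass_avg p (G : nat -> meas R) F :
  absmass (mscale (p%:R)^-1 (\big[@madd R/[::]]_(i < p) G i)) F <=
  (p%:R)^-1 * \sum_(i < p) absmass (G i) F.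
Proof.
rewrite absmass_mscale ger0_norm ?invr_ge0 ?ler0n // ler_wpM2l ?invr_ge0 ?ler0n //.
rewrite /absmass exchange_big /= ler_sum // => k _.
by rewrite nth_bigmadd ler_norm_sum.
Qed.

Lemma absmass_flatten mu (Fs : seq (seq nat)) :
  absmass mu (flatten Fs) = \sum_(G <- Fs) absmass mu G.
Proof. by rewrite /absmass big_flatten. Qed.

Lemma absmass_eq0 mu F : (forall k, k \in F -> mu`_k = 0) -> absmass mu F = 0.
Proof. by move=> h; rewrite /absmass big_seq big1 // => k /h ->; rewrite normr0. Qed.

End Measures.

Section Sums.
Variable R : realType.

Lemma sumr_le1_single (I : finType) (P : pred I) (f : I -> R) :
  (forall i, P i -> 0 <= f i <= 1) ->
  (forall i j, P i -> P j -> f i != 0 -> f j != 0 -> i = j) ->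
  \sum_(i | P i) f i <= 1.
Proof.
move=> h01 huniq.
have [[i /andP[Pi fi]] | hno] := pselect (exists i, P i && (f i != 0)).
  rewrite (bigD1 i) //= big1 ?addr0 => [|j /andP[Pj nji]]; first by case/andP: (h01 i Pi).
  by apply/eqP/negPn/negP => fj; move: nji; rewrite (huniq j i) ?eqxx.
rewrite big1 ?ler01 // => i Pi; apply/eqP/negPn/negP => fi.
by apply: hno; exists i; rewrite Pi.
Qed.

Lemma sum_inv_doubling_le (p : nat -> nat) x m : (0 < x)%N -> infsubN p -> doubling p ->
  \sum_(i < m | (x < p i)%N) ((p i)%:R)^-1 <= 2 / x%:R :> R.
Proof.
move=> hx hp hD; rewrite big_mkcond /=.
have p0 i : 0 < (p i)%:R :> R by rewrite ltr0n infsubN_gt0.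
have x0 : 0 < x%:R :> R by rewrite ltr0n.
suff : \sum_(i < m) (if (x < p i)%N then ((p i)%:R)^-1 else 0) +
       (if (x < p m)%N then 2 / (p m)%:R else 2 / x%:R) <= 2 / x%:R :> R.
  by apply: le_trans; rewrite lerDl; case: ifP => _; rewrite divr_ge0 // ltW.
elim: m => [|m IH]; first by rewrite big_ord0 add0r; case: ifP => h //;
  rewrite ler_pM2l // lef_pV2 ?posrE // ler_nat ltnW.
rewrite big_ord_recr /=.
have hDm : 2 * (p m)%:R <= (p m.+1)%:R :> R by rewrite -natrM ler_nat.
have hinv : 2 / (p m.+1)%:R <= ((p m)%:R)^-1 :> R.
  by rewrite ler_pdivrMr // mulrC -ler_pdivrMr ?invr_gt0 // invrK.
case: ifP => hm; case: ifP => hm1; move: IH; rewrite hm => IH.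
- lra.
- by rewrite (ltn_trans hm (hp.1 m)) in hm1.
- have : 2 / (p m.+1)%:R <= 2 / x%:R :> R.
    by rewrite ler_pM2l // lef_pV2 ?posrE // ler_nat ltnW.
  lra.
- lra.
Qed.

(* Only the i with p i <= x < p i.+1 and the i in E contribute up to 1 each; the
   remaining terms form a geometric series. *)
Lemma sum_blocks_le (a : nat -> R) (p : nat -> nat) (E : pred nat) x (c : R) m :
  infsubN p -> doubling p -> (0 < x)%N -> 0 <= c ->
  (forall i, 0 <= a i <= 1) ->
  (forall i, (p i.+1 <= x)%N -> a i = 0) ->
  (forall i j, E i -> E j -> i = j) ->
  (forall i, (x < p i)%N -> ~~ E i -> a i <= c / (p i)%:R) ->
  \sum_(i < m) a i <= 2 + 2 * c / x%:R.
Proof.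
move=> hp hD hx hc ha hbefore hE hafter.
have hinit : \sum_(i < m | ~~ (x < p i)%N) a i <= 1.
  apply: sumr_le1_single => [i _ | i j]; first exact: ha.
  rewrite -!leqNgt => hi hj hai haj; apply: val_inj => /=.
  have hi1 : (x < p i.+1)%N by rewrite ltnNge; apply: contra hai => /hbefore ->.
  have hj1 : (x < p j.+1)%N by rewrite ltnNge; apply: contra haj => /hbefore ->.
  case: (ltngtP i j) => // hij.
    have : (p i.+1 <= p j)%N by rewrite (incr_leq hp.1).
    lia.
  have : (p j.+1 <= p i)%N by rewrite (incr_leq hp.1).
  lia.
have hexc : \sum_(i < m | (x < p i)%N && E i) a i <= 1.
  apply: sumr_le1_single => [i _ | i j /andP[_ Ei] /andP[_ Ej] _ _]; first exact: ha.
  exact/val_inj/hE.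
have hgeom : \sum_(i < m | (x < p i)%N && ~~ E i) a i <= 2 * c / x%:R.
  apply: le_trans (_ : c * \sum_(i < m | (x < p i)%N) ((p i)%:R)^-1 <= _).
    rewrite mulr_sumr big_mkcondr ler_sum // => i hi.
    by case: ifP => hEi; [exact: hafter | rewrite mulr_ge0 ?invr_ge0].
  by rewrite [2 * c]mulrC -mulrA ler_wpM2l // sum_inv_doubling_le.
rewrite (bigID (fun i : 'I_m => x < p i)%N) /= (bigID (fun i : 'I_m => E i)) /=.
lra.
Qed.

Lemma div_nat_eventually_le (C eps : R) : 0 < eps ->
  exists K : nat, forall n, (K <= n)%N -> C / n%:R <= eps.
Proof.
move=> heps; pose K := Num.Def.archi_bound (`|C| / eps).
have hK : `|C| / eps < K%:R by apply: archi_boundP; rewrite divr_ge0 // ltW.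
exists K => n hKn.
have hn : `|C| / eps < n%:R by apply: lt_le_trans hK _; rewrite ler_nat.
have n0 : 0 < n%:R :> R by apply: le_lt_trans hn; rewrite divr_ge0 // ltW.
rewrite ler_pdivrMr //; move: hn; rewrite ltr_pdivrMr // => hn.
have := ler_norm C; lra.
Qed.

End Sums.

Section Ordinals.
Variables (O : omega1) (beta : O -> nat -> O).
Hypothesis hbeta : fundamental_seqs beta.
Implicit Types (x y z xi eta zeta : O).

Lemma olt_irr x : ~ olt x x.
Proof. by elim: (olt_wf x) => {}x _ IH hx; apply: (IH x hx hx). Qed.

Lemma olt_asym x y : olt x y -> ~ olt y x.
Proof. by move=> h1 h2; apply: (olt_irr (olt_trans h1 h2)). Qed.

Lemma is_succ_of_pred_unique a b z : is_succ_of a z -> is_succ_of b z -> a = b.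
Proof.
move=> [ha1 ha2] [hb1 hb2].
case: (ha2 _ hb1) => // hba; case: (hb2 _ ha1) => // hab.
by case: (olt_asym hab hba).
Qed.

Lemma is_succ_of_unique a z z' : is_succ_of a z -> is_succ_of a z' -> z = z'.
Proof.
have hnlt z1 z2 : is_succ_of a z1 -> is_succ_of a z2 -> ~ olt z1 z2.
  move=> [h1 _] [_ h2] /h2 [e | hlt]; first by rewrite e in h1; apply: olt_irr h1.
  exact: olt_asym h1 hlt.
move=> h h'; case: (olt_total z z') => [/(hnlt _ _ h h') [] | [// | /(hnlt _ _ h' h) []]].
Qed.

Lemma zero_not_succ a z : is_zero z -> ~ is_succ_of a z.
Proof. by move=> hz [h _]; apply: (hz _ h). Qed.

Lemma zero_not_limit z : is_zero z -> ~ is_limit z.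
Proof. by move=> hz [[w hw] _]; apply: (hz _ hw). Qed.

Lemma succ_not_limit a z : is_succ_of a z -> ~ is_limit z.
Proof. by move=> hs [_ hn]; apply: hn; exists a. Qed.

Lemma ord_cases z : [\/ is_zero z, exists a, is_succ_of a z | is_limit z].
Proof.
have [hs | hs] := pselect (exists a, is_succ_of a z); first exact: Or32.
have [hw | hw] := pselect (exists w, olt w z); first by apply: Or33.
by apply: Or31 => w hlt; apply: hw; exists w.
Qed.

Lemma limit_seq xi : is_limit xi -> exists s : nat -> O,
  [/\ forall n, (0 < n)%N -> is_succ_of (beta xi n) (s n),
      forall n m, (0 < n)%N -> (n < m)%N -> olt (s n) (s m),
      forall n, olt (s n) xi &
      forall z, olt z xi -> exists2 n, (0 < n)%N & olt z (s n)].
Proof.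
move=> hl; have [_ /(_ hl) [s [s1 [s2 [s3 s4]]]]] := hbeta xi.
exists s; split => // n m hn; elim: m => // m IH.
rewrite ltnS leq_eqVlt => /orP[/eqP <- | hnm]; first exact: s2.
by apply: olt_trans (IH hnm) (s2 _ _); apply: leq_trans hnm.
Qed.

Lemma limit_beta_inj g p q : is_limit g -> (0 < p)%N -> (0 < q)%N ->
  beta g p = beta g q -> p = q.
Proof.
move=> hl hp hq e; have [s [s1 s2 _ _]] := limit_seq hl.
have es : s p = s q by apply: (is_succ_of_unique (a := beta g q)); [rewrite -e |]; apply: s1.
case: (ltngtP p q) => // hpq; [have := s2 _ _ hp hpq | have := s2 _ _ hq hpq].
  by rewrite es => /olt_irr.
by rewrite es => /olt_irr.
Qed.

End Ordinals.

Section RepeatedAverages.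
Variables (O : omega1) (beta : O -> nat -> O).
Hypothesis hbeta : fundamental_seqs beta.
Variable R : realType.
Implicit Types (xi eta g : O) (P Q L : nat -> nat).
Local Notation ravg := (ravg beta R).

Definition first_avg xi P : meas R := ravg xi P 0.

Definition avg_step eta P : meas R :=
  mscale ((P 0)%:R)^-1 (\big[@madd R/[::]]_(i < P 0) ravg eta P i).

Lemma ravg_eq xi : ravg xi = ravg_body beta (fun eta _ => ravg eta).
Proof.
rewrite /ravg Fix_eq // => x f f' hff'.
by have -> : f = f' by do 2 apply: functional_extensionality_dep => ?; apply: hff'.
Qed.

Lemma ravg_zero xi P n : is_zero xi -> ravg xi P n = dirac R (P n).
Proof.
move=> hz; rewrite ravg_eq /ravg_body.
case: pselect => [[a ha] | _]; first by case: (zero_not_succ hz ha).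
by case: pselect => [[w hw] | _] //; case: (hz _ hw).
Qed.

Lemma first_avg_succ xi eta P : is_succ_of eta xi -> first_avg xi P = avg_step eta P.
Proof.
move=> hs; rewrite /first_avg ravg_eq /ravg_body.
case: pselect => [h | []]; last by exists eta.
by case: (cid h) => /= e he; rewrite (is_succ_of_pred_unique he hs).
Qed.

Lemma first_avg_lim xi P g : is_limit xi -> (0 < P 0)%N ->
  is_succ_of (beta xi (P 0)) g -> first_avg xi P = first_avg g P.
Proof.
move=> hl hP hg; rewrite /first_avg (ravg_eq xi) /ravg_body.
case: pselect => [[a ha] | _]; first by case: (succ_not_limit ha hl).
case: pselect => [_ | []]; last by case: hl.
rewrite /=; case: pselect => [h | hno].
  by case: (cid h) => /= g' [hg' _]; rewrite (is_succ_of_unique hg' hg).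
have [s [s1 _ s3 _]] := limit_seq hbeta hl.
by case: hno; exists g; split => //; rewrite (is_succ_of_unique hg (s1 _ hP)).
Qed.

Lemma ravgS xi P n : ~ is_zero xi ->
  ravg xi P n.+1 = first_avg xi (after P (maxsupp (ravg xi P n))).
Proof.
move=> hxi; rewrite /first_avg ravg_eq /ravg_body.
case: pselect => // _; case: pselect => // hno.
by case: hxi => z hz; apply: hno; exists z.
Qed.

Definition ravg_set g L i := if i is i'.+1 then after L (maxsupp (ravg g L i')) else L.
Definition ravg_head g L i := ravg_set g L i 0.

Lemma ravg_first_avg g L i : ~ is_zero g -> ravg g L i = first_avg g (ravg_set g L i).
Proof. by case: i => [|i] hg //=; rewrite ravgS. Qed.

Lemma ravg_set_infsub g L i : incr L -> infsub (ravg_set g L i) L.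
Proof. by case: i => [|i] hL /=; [exact: infsub_refl | exact: infsub_after]. Qed.

Lemma ravg_first_avg_infsub xi P i : incr P ->
  exists2 Q, infsub Q P & ravg xi P i = first_avg xi Q.
Proof.
move=> hP; have [hz | hz] := pselect (is_zero xi); last first.
  by exists (ravg_set xi P i); [exact: ravg_set_infsub | exact: ravg_first_avg].
exists (fun j => P (j + i)%N); last by rewrite /first_avg !ravg_zero.
by split => [j | j]; [rewrite (incr_ltn hP) addSn | exists (j + i)%N].
Qed.

Lemma first_avg_prob xi P : infsubN P ->
  is_prob (first_avg xi P) /\ supp_in P (first_avg xi P).
Proof.
elim: (olt_wf xi) P => {}xi _ IH P hP.
case: (ord_cases xi) => [hz | [eta hs] | hl].
- rewrite /first_avg ravg_zero //; split => [|k]; first exact: prob_dirac.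
  by rewrite nth_dirac; case: (eqVneq (P 0) k) => [<- _ | _]; [exists 0%N | rewrite eqxx].
- have hi i : is_prob (ravg eta P i) /\ supp_in P (ravg eta P i).
    have [Q hQ ->] := ravg_first_avg_infsub eta i hP.1.
    have [h1 h2] := IH eta hs.1 Q (infsubN_infsub hQ hP).
    by split => //; apply: supp_in_infsub h2.
  rewrite (first_avg_succ _ hs); split; first by apply: prob_avg hP.2 _ => i _; case: (hi i).
  by apply: supp_in_avg => i _; case: (hi i).
- have [s [s1 _ s3 _]] := limit_seq hbeta hl.
  by rewrite (first_avg_lim hl hP.2 (s1 _ hP.2)); apply: IH.
Qed.

Lemma ravg_prob xi P i : infsubN P -> is_prob (ravg xi P i) /\ supp_in P (ravg xi P i).
Proof.
move=> hP; have [Q hQ ->] := ravg_first_avg_infsub xi i hP.1.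
have [h1 h2] := first_avg_prob xi (infsubN_infsub hQ hP).
by split => //; apply: supp_in_infsub h2.
Qed.

Lemma maxsupp_ravg_ge xi P i : infsubN P -> (P 0 <= maxsupp (ravg xi P i))%N.
Proof.
move=> hP; have [hp hs] := ravg_prob xi i hP.
have [k hk] := prob_supp_neq0 hp; apply: leq_trans (leq_maxsupp hk).
by have [j <-] := hs k hk; rewrite (incr_leq hP.1).
Qed.

Lemma ravg_set_tail g L i : infsubN L -> infsub (ravg_set g L i.+1) (tail L).
Proof. by move=> hL; apply: infsub_after_tail hL.1 (maxsupp_ravg_ge _ _ hL). Qed.

Lemma ravg_supp_bounds g L i k : ~ is_zero g -> infsubN L -> (ravg g L i)`_k != 0 ->
  (ravg_head g L i <= k < ravg_head g L i.+1)%N.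
Proof.
move=> hg hL hk; apply/andP; split; last first.
  exact: leq_ltn_trans (leq_maxsupp hk) (after_gt _ _ hL.1).
have hLi := ravg_set_infsub g i hL.1.
have [_ hs] := first_avg_prob g (infsubN_infsub hLi hL).
by move: hk; rewrite ravg_first_avg // => /hs [j <-]; rewrite (incr_leq hLi.1).
Qed.

Lemma ravg_head_infsub g L : ~ is_zero g -> infsubN L -> infsub (ravg_head g L) L.
Proof.
move=> hg hL; split => [i | i]; last by have [_ h] := ravg_set_infsub g i hL.1; apply: h.
have [k hk] := prob_supp_neq0 (ravg_prob g i hL).1.
by have /andP[h1 h2] := ravg_supp_bounds hg hL hk; apply: leq_ltn_trans h1 h2.
Qed.

End RepeatedAverages.

Section Schreier.
Variables (O : omega1) (beta : O -> nat -> O).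
Hypothesis hbeta : fundamental_seqs beta.
Implicit Types (z eta : O) (F : seq nat).

Lemma sorted_ltn_cat F G : F != [::] -> sorted ltn F -> sorted ltn G ->
  (G = [::] \/ (last 0 F < head 0 G)%N) -> sorted ltn (F ++ G).
Proof.
case: F => [//|a F] _ /= hF hG hlt; rewrite cat_path hF /=.
by case: G hG hlt => [|b G] //= hG [//|->].
Qed.

Lemma sorted_ltn_flatten (Fs : seq (seq nat)) : (forall G, G \in Fs -> G != [::]) ->
  (forall G, G \in Fs -> sorted ltn G) ->
  sorted (fun A B => (last 0 A < head 0 B)%N) Fs -> sorted ltn (flatten Fs).
Proof.
elim: Fs => [//|G Fs IH] hne hs hsort /=.
have inFs H : H \in Fs -> H \in G :: Fs by rewrite inE => ->; rewrite orbT.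
apply: sorted_ltn_cat; [exact/hne/mem_head | exact/hs/mem_head | | ].
  by apply: IH => [H /inFs/hne | H /inFs/hs | ]; last exact: path_sorted hsort.
clear IH hs inFs; case: Fs hne hsort => [|H Fs] hne /=; first by left.
move=> /andP[hlt _]; right.
have : H != [::] by apply: hne; rewrite !inE eqxx orbT.
by case: H hlt {hne}.
Qed.

Lemma schreier_sorted z F : schreier beta z F -> sorted ltn F.
Proof. by elim=> // {}z eta Fs _ _ hne _ IH hsort _; apply: sorted_ltn_flatten. Qed.

Lemma schreier_uniq z F : schreier beta z F -> uniq F.
Proof. by move/schreier_sorted/sorted_uniq; apply; [exact: ltn_trans | exact: ltnn]. Qed.

Lemma sorted_ltn_head_leq F k : sorted ltn F -> k \in F -> (head 0 F <= k)%N.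
Proof.
case: F => [//|a F] /= hs; rewrite inE => /orP[/eqP -> // | hk].
by have /allP /(_ _ hk) := order_path_min ltn_trans hs; apply: ltnW.
Qed.

Lemma schreier_nil z : schreier beta z [::].
Proof.
case: (ord_cases z) => [hz | [a ha] | hl]; first exact: sch_zero_nil.
  exact: sch_succ_nil ha.
have [s [s1 _ _ _]] := limit_seq hbeta hl.
apply: (sch_limit hl (ltn0Sn 0) (s1 1%N isT)); last by left.
exact: sch_succ_nil (s1 1%N isT).
Qed.

Lemma schreier_zero_inv z F : is_zero z -> schreier beta z F ->
  F = [::] \/ exists k, F = [:: k].
Proof.
move=> hz hF; case: hF hz.
- by left.
- by right; eexists.
- by left.
- by move=> z' eta Fs hs _ _ _ _ _ hz; case: (zero_not_succ hz hs).
- by move=> z' n g F' hl _ _ _ _ hz; case: (zero_not_limit hz hl).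
Qed.

Lemma schreier_succ_inv eta z F : is_succ_of eta z -> schreier beta z F ->
  F = [::] \/ exists2 Fs, F = flatten Fs &
    [/\ Fs != [::], forall G, G \in Fs -> G != [::],
        forall G, G \in Fs -> schreier beta eta G & (size Fs <= head 0 (head [::] Fs))%N].
Proof.
move=> hs hF; case: hF hs.
- by move=> z' hz' hs; case: (zero_not_succ hz' hs).
- by move=> z' k hz' _ hs; case: (zero_not_succ hz' hs).
- by left.
- move=> z' e Fs he hne hne' hsch _ hsize hs; right; exists Fs => //.
  by rewrite (is_succ_of_pred_unique hs he).
- by move=> z' n g F' hl _ _ _ _ hs; case: (succ_not_limit hs hl).
Qed.

Lemma schreier_lim_inv z F : is_limit z -> schreier beta z F ->
  F = [::] \/ exists n g, [/\ (0 < n)%N, is_succ_of (beta z n) g, schreier beta g F &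
    (n <= head 0 F)%N].
Proof.
move=> hl hF; case: hF hl.
- by move=> z' hz' hl; case: (zero_not_limit hz' hl).
- by move=> z' k hz' _ hl; case: (zero_not_limit hz' hl).
- by move=> z' e hs hl; case: (succ_not_limit hs hl).
- by move=> z' e Fs hs _ _ _ _ _ hl; case: (succ_not_limit hs hl).
- move=> z' n g F' _ hn hg hF [-> | hnF] _; first by left.
  by right; exists n, g.
Qed.

Lemma snorm_le z (R : realType) (mu : meas R) c :
  (forall F, schreier beta z F -> absmass mu F <= c) -> snorm beta z mu <= c.
Proof.
move=> h; apply: ge_sup.
  by exists (absmass mu [::]), [::]; split => //; apply: schreier_nil.
by move=> x [F [hF ->]]; apply: h.
Qed.

End Schreier.

Section Induction.
Variables (O : omega1) (beta : O -> nat -> O).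
Hypothesis hbeta : fundamental_seqs beta.
Variable R : realType.
Implicit Types (xi eta zeta g b z : O) (P Q L : nat -> nat).
Local Notation ravg := (ravg beta R).
Local Notation first_avg := (first_avg beta R).
Local Notation avg_step := (avg_step beta R).
Local Notation ravg_set := (ravg_set beta R).
Local Notation ravg_head := (ravg_head beta R).

Definition small_first zeta xi (eps : R) L :=
  forall F, schreier beta zeta F -> absmass (first_avg xi L) F <= eps.

Definition bounded_sums g (C : R) L :=
  forall F, schreier beta g F -> forall m, \sum_(i < m) absmass (ravg g L i) F <= C.

Lemma absmass_avg_step_bounded b C P F : infsubN P -> bounded_sums b C P ->
  schreier beta b F -> absmass (avg_step b P) F <= C / (P 0)%:R.
Proof.
move=> hP hB hF; apply: le_trans (absmass_avg _ _ _) _.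
by rewrite mulrC ler_pM2r ?invr_gt0 ?ltr0n ?hP.2 // hB.
Qed.

Lemma absmass_avg_step_small b z P (e : R) : ~ is_zero b -> infsubN P -> 0 <= e ->
  (forall Q, infsub Q (tail P) -> small_first z b e Q) ->
  forall F, schreier beta z F -> absmass (avg_step b P) F <= ((P 0)%:R)^-1 + e.
Proof.
move=> hb hP he hQ F hF; apply: le_trans (absmass_avg _ _ _) _.
have hterm i : absmass (ravg b P i.+1) F <= e.
  by rewrite ravg_first_avg //; apply: hQ (ravg_set_tail hbeta R b i hP) F hF.
have hfirst : absmass (ravg b P 0) F <= 1.
  exact: absmass_prob_le1 (ravg_prob hbeta R b 0 hP).1 (schreier_uniq hF).
case: (P 0) (hP.2) => [//|p] _; rewrite big_ord_recl mulrDr lerD //.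
  by rewrite -[X in _ <= X]mulr1 ler_wpM2l ?invr_ge0.
have hsum : \sum_(i < p) absmass (ravg b P (lift ord0 i)) F <= p%:R * e.
  apply: le_trans (_ : \sum_(i < p) e <= _); last by rewrite sumr_const card_ord mulr_natl.
  by apply: ler_sum => i _; rewrite lift0.
have hpe : p%:R * e <= e * p.+1%:R by rewrite mulrC ler_wpM2l // ler_nat.
by rewrite mulrC ler_pdivrMr ?ltr0n //; lra.
Qed.

Lemma sum_absmass_ravg_le g L F x (c : R) (E : pred nat) m :
  ~ is_zero g -> infsubN L -> doubling L -> uniq F -> (0 < x)%N ->
  (forall k, k \in F -> (x <= k)%N) -> 0 <= c -> (forall i j, E i -> E j -> i = j) ->
  (forall i, (x < ravg_head g L i)%N -> ~~ E i ->
     absmass (ravg g L i) F <= c / (ravg_head g L i)%:R) ->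
  \sum_(i < m) absmass (ravg g L i) F <= 2 + 2 * c / x%:R.
Proof.
move=> hg hL hD hF hx hxF hc hE hafter.
have hp := ravg_head_infsub hbeta R hg hL.
apply: (sum_blocks_le (p := ravg_head g L)) hE hafter => //.
- exact: infsubN_infsub hp hL.
- exact: doubling_infsub hp hL.1 hD.
- move=> i; rewrite absmass_ge0 absmass_prob_le1 //; exact: (ravg_prob hbeta R g i hL).1.
- move=> i hi; apply: absmass_eq0 => k hk; apply/eqP/negPn/negP => hnz.
  have /andP[_ hk'] := ravg_supp_bounds hbeta hg hL hnz.
  by have := hxF k hk; lia.
Qed.

Lemma bounded_sums_zero g L : is_zero g -> incr L -> bounded_sums g 1 L.
Proof.
move=> hz hL F hF m.
case: (schreier_zero_inv hz hF) => [-> | [k ->]].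
  by rewrite big1 ?ler01 // => i _; rewrite /absmass big_nil.
apply: sumr_le1_single => [i _ | i j _ _]; rewrite /absmass !big_seq1 !ravg_zero // !nth_dirac.
  by case: eqP; rewrite ?normr0 ?normr1 ?lexx ?ler01.
case: (eqVneq (L i) k) => [hi _ | _]; last by rewrite normr0 eqxx.
case: (eqVneq (L j) k) => [hj _ | _]; last by rewrite normr0 eqxx.
by apply/val_inj/(incr_inj hL); rewrite hi hj.
Qed.

Lemma bounded_sums_succ d g C L : is_succ_of d g -> 0 <= C -> infsubN L -> doubling L ->
  (forall L', infsub L' L -> bounded_sums d C L') -> bounded_sums g (2 + 2 * C) L.
Proof.
move=> hs hC hL hD hB F hF m.
have hg : ~ is_zero g by move=> hz; apply: zero_not_succ hz hs.
case: (schreier_succ_inv hs hF) => [-> | [Fs hFe [hFs hne hsch hsize]]].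
  by rewrite big1 => [|i _]; [rewrite addr_ge0 ?mulr_ge0 | rewrite /absmass big_nil].
subst F.
have hx : (size Fs <= head 0%N (flatten Fs))%N.
  move: hsize; case: Fs hFs hne hsch hF => [//|G Fs] _ hne _ _ /=.
  by have := hne G (mem_head _ _); case: G {hne}.
set x := head 0%N (flatten Fs) in hx *.
have hx0 : (0 < x)%N by apply: leq_trans hx; rewrite lt0n size_eq0.
have -> : 2 + 2 * C = 2 + 2 * (C * x%:R) / x%:R by rewrite -mulrA mulfK // pnatr_eq0 -lt0n.
apply: (sum_absmass_ravg_le (E := pred0)) => //.
- exact: schreier_uniq hF.
- by move=> k; apply: sorted_ltn_head_leq (schreier_sorted hF).
- by rewrite mulr_ge0.
move=> i hi _; have hLi := ravg_set_infsub beta R g i hL.1.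
have hLi' := infsubN_infsub hLi hL.
rewrite ravg_first_avg // (first_avg_succ _ _ _ hs) absmass_flatten.
apply: le_trans (_ : \sum_(G <- Fs) C / (ravg_head g L i)%:R <= _).
  rewrite !big_seq ler_sum // => G hG.
  exact: absmass_avg_step_bounded hLi' (hB _ hLi) (hsch G hG).
rewrite big_const_seq count_predT iter_addr_0 -[_ *+ size Fs]mulr_natl mulrA.
rewrite ler_pM2r ?invr_gt0 ?ltr0n ?hLi'.2 //.
by rewrite mulrC ler_wpM2l // ler_nat.
Qed.

Definition small_first_below g q Q := forall n z, (0 < n < q)%N ->
  is_succ_of (beta g n) z -> olt z (beta g q) -> small_first z (beta g q) (q%:R)^-1 Q.

Definition tail_small_first_below g L :=
  forall Q, infsub Q (tail L) -> small_first_below g (L 0) Q.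

Lemma absmass_ravg_lim_le g L i n z F : is_limit g -> infsubN L ->
  (0 < n < ravg_head g L i)%N -> is_succ_of (beta g n) z -> beta g (ravg_head g L i) <> z ->
  tail_small_first_below g (ravg_set g L i) -> schreier beta z F ->
  absmass (ravg g L i) F <= 2 / (ravg_head g L i)%:R.
Proof.
move=> hl hL /andP[hn hni] hz hzi hT hF.
have [s [s1 s2 _ _]] := limit_seq hbeta hl.
have hLi := infsubN_infsub (ravg_set_infsub beta R g i hL.1) hL.
have hsi := s1 _ hLi.2.
have hlt : olt z (beta g (ravg_head g L i)).
  rewrite (is_succ_of_unique hz (s1 n hn)) in hzi *.
  by case: (hsi.2 _ (s2 n _ hn hni)) => // e; case: hzi.
have hb : ~ is_zero (beta g (ravg_head g L i)) by move=> hz0; apply: hz0 hlt.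
have hg : ~ is_zero g by move=> hz0; apply: zero_not_limit hz0 hl.
rewrite ravg_first_avg // (first_avg_lim hbeta R hl hLi.2 hsi) (first_avg_succ _ _ _ hsi).
apply: le_trans (absmass_avg_step_small (e := ((ravg_head g L i)%:R)^-1) hb hLi _ _ hF) _.
- by rewrite invr_ge0.
- by move=> Q hQ; apply: (hT Q hQ n z _ hz hlt); rewrite hn.
- by rewrite /ravg_head; lra.
Qed.

Lemma bounded_sums_lim g L : is_limit g -> infsubN L -> doubling L ->
  (forall L', infsub L' L -> tail_small_first_below g L') -> bounded_sums g 6 L.
Proof.
move=> hl hL hD hT F hF m.
have hg : ~ is_zero g by move=> hz; apply: zero_not_limit hz hl.
case: (schreier_lim_inv hl hF) => [-> | [n [z [hn hz hFz hnF]]]].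
  by rewrite big1 // => i _; rewrite /absmass big_nil.
have hx0 : (0 < head 0%N F)%N := leq_trans hn hnF.
have hp := ravg_head_infsub hbeta R hg hL.
apply: le_trans (_ : 2 + 2 * 2 / (head 0%N F)%:R <= 6); last first.
  have : ((head 0%N F)%:R)^-1 <= 1 :> R by rewrite invf_le1 ?ltr0n ?ler1n.
  lra.
apply: (sum_absmass_ravg_le (E := fun i => `[< beta g (ravg_head g L i) = z >])) => //.
- exact: schreier_uniq hF.
- by move=> k; apply: sorted_ltn_head_leq (schreier_sorted hF).
- move=> i j /asboolP hi /asboolP hj; apply/(incr_inj hp.1)/(limit_beta_inj hbeta hl).
  + exact: infsubN_gt0 (infsubN_infsub hp hL).
  + exact: infsubN_gt0 (infsubN_infsub hp hL).
  + by rewrite hi hj.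
move=> i hi /asboolP hEi; apply: (absmass_ravg_lim_le hl hL _ hz hEi _ hFz).
  by rewrite hn (leq_ltn_trans hnF hi).
exact: hT (ravg_set_infsub beta R g i hL.1).
Qed.

Lemma small_first_succ b xi zeta (eps : R) L : is_succ_of b xi -> infsubN L ->
  (forall L', infsub L' L -> small_first zeta b eps L') -> small_first zeta xi eps L.
Proof.
move=> hs hL hsmall F hF; rewrite (first_avg_succ _ _ _ hs).
apply: le_trans (absmass_avg _ _ _) _.
rewrite mulrC ler_pdivrMr ?ltr0n ?hL.2 //.
apply: le_trans (_ : \sum_(t < L 0) eps <= _); last by rewrite sumr_const card_ord mulr_natr.
apply: ler_sum => t _; have [Q hQ ->] := ravg_first_avg_infsub beta R b t hL.1.
exact: hsmall Q hQ F hF.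
Qed.

Lemma small_first_lim xi zeta C (eps : R) L : is_limit xi -> infsubN L ->
  bounded_sums zeta C L -> C / (L 0)%:R <= eps -> ((L 0)%:R)^-1 <= eps / 2 ->
  (forall g, is_succ_of (beta xi (L 0)) g -> olt zeta g) ->
  (forall Q, infsub Q (tail L) -> olt zeta (beta xi (L 0)) ->
     small_first zeta (beta xi (L 0)) (eps / 2) Q) ->
  small_first zeta xi eps L.
Proof.
move=> hl hL hB hC h1 hzL hT F hF.
have [s [s1 _ _ _]] := limit_seq hbeta hl.
have hsq := s1 _ hL.2.
rewrite (first_avg_lim hbeta R hl hL.2 hsq) (first_avg_succ _ _ _ hsq).
case: (hsq.2 _ (hzL _ hsq)) => [ezb | hzb].
  by rewrite -ezb; apply: le_trans (absmass_avg_step_bounded hL hB hF) hC.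
have hb : ~ is_zero (beta xi (L 0)) by move=> hz; apply: hz hzb.
have he : 0 <= eps / 2 by apply: le_trans h1; rewrite invr_ge0.
apply: le_trans (absmass_avg_step_small hb hL he (fun Q hQ => hT Q hQ hzb) hF) _.
lra.
Qed.

Definition first_avgs_small xi :=
  forall zeta (eps : R), olt zeta xi -> 0 < eps -> large (small_first zeta xi eps).

Definition ravg_sums_bounded g := exists2 C : R, 0 <= C & large (bounded_sums g C).

Lemma ravg_sums_bounded_zero g : is_zero g -> ravg_sums_bounded g.
Proof.
move=> hz; exists 1 => //.
by apply: large_all => L hL; apply: bounded_sums_zero hz hL.1.
Qed.

Lemma ravg_sums_bounded_succ d g : is_succ_of d g ->
  ravg_sums_bounded d -> ravg_sums_bounded g.
Proof.
move=> hs [C hC hB]; exists (2 + 2 * C); first by rewrite addr_ge0 ?mulr_ge0.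
apply: large_impl (large_and large_doubling (large_hered hB)) => L hL [hD hBL].
exact: bounded_sums_succ hs hC hL hD hBL.
Qed.

Lemma ravg_sums_bounded_lim g : is_limit g -> (forall b, olt b g -> first_avgs_small b) ->
  ravg_sums_bounded g.
Proof.
move=> hl hT; have [s [s1 _ s3 _]] := limit_seq hbeta hl.
have htail : large (tail_small_first_below g).
  apply: (large_diagonal (Pr := small_first_below g)) => q.
  have hsmall n : (n < q)%N -> large (fun Q => (0 < n)%N -> olt (s n) (beta g q) ->
      small_first (s n) (beta g q) (q%:R)^-1 Q).
    move=> hnq; apply: large_cond => hn; apply: large_cond => hsn.
    have hq : (0 < q)%N := ltn_trans hn hnq.
    apply: hT hsn _; last by rewrite invr_gt0 ltr0n.
    by apply: olt_trans (s3 q); case: (s1 q hq).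
  apply: large_impl (large_all_lt hsmall) => Q _ hQ n z /andP[hn hnq] hz.
  by rewrite (is_succ_of_unique hz (s1 n hn)); apply: hQ.
exists 6; first by rewrite ler0n.
apply: large_impl (large_and large_doubling (large_hered htail)) => L hL [hD hTL].
exact: bounded_sums_lim hl hL hD hTL.
Qed.

Lemma first_avgs_small_succ b xi : is_succ_of b xi -> first_avgs_small b ->
  ravg_sums_bounded b -> first_avgs_small xi.
Proof.
move=> hs hT [C _ hB] zeta eps hzx heps.
case: (hs.2 _ hzx) => [-> | hzb].
  have [K hK] := div_nat_eventually_le C heps.
  apply: large_impl (large_and hB (large_ge K)) => L hL [hBL hKL] F hF.
  rewrite (first_avg_succ _ _ _ hs).
  exact: le_trans (absmass_avg_step_bounded hL hBL hF) (hK _ hKL).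
apply: large_impl (large_hered (hT zeta eps hzb heps)) => L hL hsmall.
exact: small_first_succ hs hL hsmall.
Qed.

Lemma first_avgs_small_lim xi : is_limit xi ->
  (forall b, olt b xi -> first_avgs_small b /\ ravg_sums_bounded b) -> first_avgs_small xi.
Proof.
move=> hl IH zeta eps hzx heps.
have [s [s1 s2 s3 s4]] := limit_seq hbeta hl.
have [n0 hn0 hzn0] := s4 zeta hzx.
have [C _ hBz] := (IH zeta hzx).2.
have heps2 : 0 < eps / 2 by rewrite divr_gt0.
have [K hK] := div_nat_eventually_le C heps.
have [K' hK'] := div_nat_eventually_le 1 heps2.
pose Pr q Q := (0 < q)%N -> olt zeta (beta xi q) -> small_first zeta (beta xi q) (eps / 2) Q.
have hPr q : large (Pr q).
  apply: large_cond => hq; apply: large_cond => hzq.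
  by apply: (IH _ _).1 hzq heps2; apply: olt_trans (s3 q); case: (s1 q hq).
apply: large_impl (large_and (large_and hBz (large_ge (maxn n0 (maxn K K'))))
  (large_diagonal hPr)).
move=> L hL [[hBL]]; rewrite !geq_max => /and3P[hn0L hKL hK'L] hTL.
apply: (small_first_lim hl hL hBL (hK _ hKL) _ _ (fun Q hQ => hTL Q hQ hL.2)).
  by rewrite -div1r; apply: hK'.
move=> g hg; rewrite (is_succ_of_unique hg (s1 _ hL.2)).
move: hn0L; rewrite leq_eqVlt => /orP[/eqP <- // | h].
exact: olt_trans hzn0 (s2 _ _ hn0 h).
Qed.

Lemma first_avgs_small_ravg_sums_bounded xi : first_avgs_small xi /\ ravg_sums_bounded xi.
Proof.
elim: (olt_wf xi) => {}xi _ IH.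
case: (ord_cases xi) => [hz | [b hs] | hl].
- by split; [move=> zeta eps /hz | exact: ravg_sums_bounded_zero].
- have [hT hB] := IH b hs.1.
  by split; [exact: first_avgs_small_succ hs hT hB | exact: ravg_sums_bounded_succ hs hB].
- split; first exact: first_avgs_small_lim hl IH.
  by apply: ravg_sums_bounded_lim hl _ => b /IH [].
Qed.

End Induction.

Unset Implicit Arguments.
Set Strict Implicit.

Theorem proposition2p15 (O : omega1) (beta : O -> nat -> O)
  (hbeta : fundamental_seqs beta) (R : realType)
  (M : nat -> nat) (hM : infsubN M) (eps : R) (heps : 0 < eps)
  (zeta xi : O) (hzx : olt zeta xi) :
  exists N : nat -> nat, infsub N M /\
    forall L : nat -> nat, infsub L N ->
      forall n : nat, snorm beta zeta (ravg beta R xi L n) < eps.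
Proof.
have [hT _] := first_avgs_small_ravg_sums_bounded hbeta R xi.
have heps2 : 0 < eps / 2 by rewrite divr_gt0.
have [N hNM hN] := hT zeta (eps / 2) hzx heps2 M hM.
exists N; split => // L hLN n.
have [Q hQL ->] := ravg_first_avg_infsub beta R xi n hLN.1.
apply: le_lt_trans (snorm_le hbeta (hN Q (infsub_trans hQL hLN))) _.
lra.
Qed.
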